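(* Assume the standing setting below and let $k\ge1$ be such that (R1)–(R3) hold. Let $\lambda\in\mathbb{R}$, let $\bar y\in\mathbb{R}^k$ have last component $0$, let $x=V_k\bar y$, and assume $J^{(k)}(\bar y,\lambda)$ is nonsingular. Define the projected Newton step $$\begin{pmatrix}\Delta y\\ \Delta\lambda\end{pmatrix}=-J^{(k)}(\bar y,\lambda)^{-1}F^{(k)}(\bar y,\lambda),\qquad \Delta x=V_k\Delta y.$$ Then $$\begin{pmatrix}\Delta x\\ \Delta\lambda\end{pmatrix}^T\nabla f(x,\lambda)=-\|F(x,\lambda)\|^2\le 0,$$ so $(\Delta x,\Delta\lambda)$ is a descent direction for $f$ at $(x,\lambda)$ whenever $F(x,\lambda)\ne0$.
   Context: Standing setting. $A\in\mathbb{R}^{m\times n}$ with $m\ge n$, $b\in\mathbb{R}^m$, $b\ne0$, $\sigma>0$, $\|\cdot\|$ the Euclidean norm. $F(x,\lambda)=\begin{pmatrix}\lambda A^T(Ax-b)+x\\ \tfrac12\|Ax-b\|^2-\tfrac{\sigma^2}{2}\end{pmatrix}$, with Jacobian $J(x,\lambda)=\begin{pmatrix}\lambda A^TA+I & A^T(Ax-b)\\ (Ax-b)^TA & 0\end{pmatrix}$, and merit function $f(x,\lambda)=\tfrac12\|F(x,\lambda)\|^2$ (so $\nabla f=J^TF$). Golub–Kahan bidiagonalization (Bidiag1): $u_0=b/\|b\|$, $\nu_0v_{-1}=0$, and for $j=0,1,2,\dots$: $r_j=A^Tu_j-\nu_jv_{j-1}$, $\mu_j=\|r_j\|$, $v_j=r_j/\mu_j$,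 $p_j=Av_j-\mu_ju_j$, $\nu_{j+1}=\|p_j\|$, $u_{j+1}=p_j/\nu_{j+1}$. No breakdown is assumed (all $\mu_j,\nu_j>0$), together with: (R1) $V_{k+1}=[v_0,\dots,v_k]$ and $U_{k+1}=[u_0,\dots,u_k]$ have orthonormal columns; (R2) $AV_k=U_{k+1}B_{k+1,k}$; (R3) $A^TU_{k+1}=V_kB_{k+1,k}^T+\mu_kv_ke_{k+1}^T$, where $V_k=[v_0,\dots,v_{k-1}]$, $e_{k+1}=(0,\dots,0,1)^T\in\mathbb{R}^{k+1}$, and $B_{k+1,k}\in\mathbb{R}^{(k+1)\times k}$ is lower bidiagonal with diagonal $\mu_0,\dots,\mu_{k-1}$ and subdiagonal $\nu_1,\dots,\nu_k$. $c_{k+1}=(\|b\|,0,\dots,0)^T\in\mathbb{R}^{k+1}$. $F^{(k)}(y,\lambda)=\begin{pmatrix}\lambda B_{k+1,k}^T(B_{k+1,k}y-c_{k+1})+y\\ \tfrac12\|B_{k+1,k}y-c_{k+1}\|^2-\tfrac{\sigma^2}{2}\end{pmatrix}$, $J^{(k)}(y,\lambda)=\begin{pmatrix}\lambda B_{k+1,k}^TB_{k+1,k}+I_k & B_{k+1,k}^T(B_{k+1,k}y-c_{k+1})\\ (B_{k+1,k}y-c_{k+1})^TB_{k+1,k} & 0\end{pmatrix}$. *)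

(* Real numbers are modelled by an arbitrary real closed
   field R : rcfType (the statement is purely algebraic; Num.sqrt gives the
   Euclidean norm). *)
From HB Require Import structures.
From mathcomp Require Import all_boot all_order all_algebra.
Set Implicit Arguments. Unset Strict Implicit. Unset Printing Implicit Defensive.
Import Order.TTheory GRing.Theory Num.Theory.
Local Open Scope ring_scope.

Section Defs.
Variable R : rcfType.

Definition vnorm p (x : 'cV[R]_p) : R := Num.sqrt ((x^T *m x) 0 0).

Definition Fsys p q (M : 'M[R]_(p, q)) (c : 'cV[R]_p) (sigma : R)
    (x : 'cV[R]_q) (lam : R) : 'cV[R]_(q + 1) :=
  col_mx (lam *: (M^T *m (M *m x - c)) + x)
         ((2^-1 * vnorm (M *m x - c) ^+ 2 - 2^-1 * sigma ^+ 2)%:M).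

Definition Jsys p q (M : 'M[R]_(p, q)) (c : 'cV[R]_p)
    (x : 'cV[R]_q) (lam : R) : 'M[R]_(q + 1) :=
  block_mx (lam *: (M^T *m M) + 1%:M) (M^T *m (M *m x - c))
           ((M *m x - c)^T *m M) 0.

(* gradient of f = 1/2 ||F||^2 : J^T F *)
Definition grad_f p q (M : 'M[R]_(p, q)) (c : 'cV[R]_p) (sigma : R)
    (x : 'cV[R]_q) (lam : R) : 'cV[R]_(q + 1) :=
  (Jsys M c x lam)^T *m Fsys M c sigma x lam.

(* Bidiag1 recursion, required for the indices needed up to step k:
   r_j, mu_j, v_j for j <= k and p_j, nu_{j+1}, u_{j+1} for j < k,
   with the convention nu_0 v_{-1} = 0, and no breakdown. *)
Definition bidiag1_upto m n (A : 'M[R]_(m, n)) (b : 'cV[R]_m)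
    (u : nat -> 'cV[R]_m) (v : nat -> 'cV[R]_n) (mu nu : nat -> R) (k : nat)
    : Prop :=
  [/\ u 0%N = (vnorm b)^-1 *: b,
      forall j, (j <= k)%N ->
        let r := A^T *m u j - (if j is j'.+1 then nu j *: v j' else 0) in
        mu j = vnorm r /\ v j = (mu j)^-1 *: r,
      forall j, (j < k)%N ->
        let pj := A *m v j - mu j *: u j in
        nu j.+1 = vnorm pj /\ u j.+1 = (nu j.+1)^-1 *: pj,
      forall j, (j <= k)%N -> 0 < mu j &
      forall j, (1 <= j <= k)%N -> 0 < nu j].

Definition Vmat n (v : nat -> 'cV[R]_n) p : 'M[R]_(n, p) :=
  \matrix_(i < n, j < p) v j i 0.
Definition Umat m (u : nat -> 'cV[R]_m) p : 'M[R]_(m, p) :=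
  \matrix_(i < m, j < p) u j i 0.

Definition Bmat (mu nu : nat -> R) k : 'M[R]_(k.+1, k) :=
  \matrix_(i < k.+1, j < k)
    if i == j :> nat then mu j
    else if i == j.+1 :> nat then nu i else 0.

Definition elast k : 'cV[R]_k.+1 := \col_(i < k.+1) (if i == k :> nat then 1 else 0).

Definition cvec m k (b : 'cV[R]_m) : 'cV[R]_k.+1 :=
  \col_(i < k.+1) (if i == 0 :> nat then vnorm b else 0).

End Defs.

From HB Require Import structures.
From mathcomp Require Import all_boot all_order all_algebra.
Import Order.TTheory GRing.Theory Num.Theory.
Set Implicit Arguments. Unset Strict Implicit.
Local Open Scope ring_scope.

(* The Krylov data (U_{k+1}, V_k, B_{k+1,k}, c_{k+1}) reduce the system (A, b)
   orthogonally: with W = diag(V_k, 1) one has F(V_k y, lam) = W F^(k)(y, lam)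
   and W^T J(V_k y, lam) W = J^(k)(y, lam), the only non-trivial ingredient
   being that the term mu_k v_k e_{k+1}^T of (R3) is killed by the residual
   because the last component of ybar vanishes.  For a Newton step d of the
   reduced system, the direction W d then satisfies
   (W d)^T J^T F = (W^T J W d)^T F^(k) = - |F^(k)|^2 = - |F|^2. *)

Section Norms.
Variable R : rcfType.

Lemma tr_mulmx_self_ge0 p (x : 'cV[R]_p) : 0 <= (x^T *m x) 0 0.
Proof.
by rewrite mxE; apply: sumr_ge0 => i _; rewrite mxE -expr2 sqr_ge0.
Qed.

Lemma tr_mulmx_self_gt0 p (x : 'cV[R]_p) : x != 0 -> 0 < (x^T *m x) 0 0.
Proof.
move=> x_neq0; rewrite lt_def tr_mulmx_self_ge0 andbT; apply: contra x_neq0.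
rewrite mxE psumr_eq0 => [/allP x0|i _]; last by rewrite mxE -expr2 sqr_ge0.
apply/eqP/matrixP => i j; rewrite (ord1 j) mxE.
by move: (x0 i (mem_index_enum _)); rewrite /= mxE mulf_eq0 orbb => /eqP.
Qed.

Lemma vnorm_sqr p (x : 'cV[R]_p) : vnorm x ^+ 2 = (x^T *m x) 0 0.
Proof. by rewrite /vnorm sqr_sqrtr // tr_mulmx_self_ge0. Qed.

Lemma vnorm_eq0 p (x : 'cV[R]_p) : (vnorm x == 0) = (x == 0).
Proof.
apply/idP/idP => [|/eqP->]; last by rewrite /vnorm mulmx0 mxE sqrtr0.
by apply: contraLR => /tr_mulmx_self_gt0 x_gt0; rewrite /vnorm gt_eqF // sqrtr_gt0.
Qed.

Lemma vnorm_isometry p q (U : 'M[R]_(p, q)) (x : 'cV[R]_q) :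
  U^T *m U = 1%:M -> vnorm (U *m x) = vnorm x.
Proof. by move=> UU; rewrite /vnorm trmx_mul -mulmxA (mulmxA U^T) UU mul1mx. Qed.

End Norms.

Lemma newton_step_descent (R : rcfType) p q (W : 'M[R]_(p, q)) (J : 'M[R]_p)
    (F : 'cV[R]_p) (Jr : 'M[R]_q) (Fr d : 'cV[R]_q) :
  W^T *m W = 1%:M -> F = W *m Fr -> W^T *m J *m W = Jr ->
  Jr *m d = - Fr ->
  ((W *m d)^T *m (J^T *m F)) 0 0 = - (F^T *m F) 0 0.
Proof.
move=> WW -> JW Jd.
have -> : (W *m Fr)^T *m (W *m Fr) = Fr^T *m Fr.
  by rewrite trmx_mul -mulmxA (mulmxA W^T) WW mul1mx.
have -> : (W *m d)^T *m (J^T *m (W *m Fr)) = (Jr *m d)^T *m Fr.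
  by rewrite -JW !trmx_mul !trmxK !mulmxA.
by rewrite Jd linearN /= mulNmx mxE.
Qed.

Section OrthogonalReduction.
Variables (R : rcfType) (p q p' q' : nat).
Variables (M : 'M[R]_(p, q)) (c : 'cV[R]_p) (B : 'M[R]_(p', q')) (c' : 'cV[R]_p').
Variables (U : 'M[R]_(p, p')) (V : 'M[R]_(q, q')) (y : 'cV[R]_q').
Hypothesis UU : U^T *m U = 1%:M.
Hypothesis VV : V^T *m V = 1%:M.
Hypothesis MV : M *m V = U *m B.
Hypothesis residual : M *m (V *m y) - c = U *m (B *m y - c').
Hypothesis normal_residual :
  M^T *m (M *m (V *m y) - c) = V *m (B^T *m (B *m y - c')).

Definition lift_mx : 'M[R]_(q + 1, q' + 1) := block_mx V 0 0 1%:M.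

Lemma lift_mx_orthonormal : lift_mx^T *m lift_mx = 1%:M.
Proof.
rewrite /lift_mx tr_block_mx !trmx0 trmx1 mulmx_block VV.
by rewrite !mulmx0 !mul0mx !addr0 add0r mulmx1 scalar_mx_block.
Qed.

Lemma lift_mx_col (d : 'cV[R]_(q' + 1)) :
  lift_mx *m d = col_mx (V *m usubmx d) (dsubmx d).
Proof.
by rewrite -{1}(vsubmxK d) mul_block_col !mul0mx addr0 add0r mul1mx.
Qed.

Lemma Fsys_reduction sigma lam :
  Fsys M c sigma (V *m y) lam = lift_mx *m Fsys B c' sigma y lam.
Proof.
rewrite /Fsys normal_residual residual vnorm_isometry //.
rewrite lift_mx_col col_mxKu col_mxKd.
by rewrite scalemxAr -mulmxDr.
Qed.

Lemma Jsys_reduction lam :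
  lift_mx^T *m Jsys M c (V *m y) lam *m lift_mx = Jsys B c' y lam.
Proof.
have VtMtr : V^T *m (M^T *m (M *m (V *m y) - c)) = B^T *m (B *m y - c').
  by rewrite normal_residual mulmxA VV mul1mx.
have hessian : V^T *m (lam *: (M^T *m M) + 1%:M) *m V = lam *: (B^T *m B) + 1%:M.
  rewrite mulmxDr mulmxDl mulmx1 VV -scalemxAr -scalemxAl mulmxA -trmx_mul.
  by rewrite -mulmxA MV trmx_mul -mulmxA (mulmxA U^T) UU mul1mx.
rewrite /Jsys /lift_mx tr_block_mx !trmx0 trmx1 !mulmx_block.
rewrite !mulmx0 !mul0mx !addr0 !add0r !mulmx1 !mul1mx hessian VtMtr.
suff -> : (M *m (V *m y) - c)^T *m M *m V = (V^T *m (M^T *m (M *m (V *m y) - c)))^T.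
  by rewrite VtMtr trmx_mul trmxK.
by rewrite !trmx_mul !trmxK mulmxA.
Qed.

End OrthogonalReduction.

Section Bidiagonalization.
Variables (R : rcfType) (m n : nat) (A : 'M[R]_(m, n)) (b : 'cV[R]_m).
Variables (u : nat -> 'cV[R]_m) (v : nat -> 'cV[R]_n) (mu nu : nat -> R).

Lemma Vmat_orthonormal_pred p :
  (Vmat v p.+1)^T *m Vmat v p.+1 = 1%:M -> (Vmat v p)^T *m Vmat v p = 1%:M.
Proof.
move=> /matrixP VV; apply/matrixP => i j.
move: (VV (widen_ord (leqnSn p) i) (widen_ord (leqnSn p) j)); rewrite !mxE => <-.
by apply: eq_bigr => l _; rewrite !mxE.
Qed.

Lemma Umat_cvec k : b != 0 -> u 0%N = (vnorm b)^-1 *: b ->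
  Umat u k.+1 *m cvec k b = b.
Proof.
move=> b_neq0 u0; have nb_neq0 : vnorm b != 0 by rewrite vnorm_eq0.
apply/matrixP => i j; rewrite (ord1 j) !mxE (bigD1 ord0) //= big1 ?addr0.
  by rewrite !mxE /= u0 mxE mulrAC mulVf // mul1r.
by move=> l l_neq0; rewrite !mxE ifN ?mulr0.
Qed.

(* Row k of B_{k+1,k} y is nu_k y_{k-1} and the last entry of c_{k+1} is 0. *)
Lemma elast_residual k (y : 'cV[R]_k) : (0 < k)%N ->
  (forall i : 'I_k, i.+1 = k -> y i 0 = 0) ->
  (elast R k)^T *m (Bmat mu nu k *m y - cvec k b) = 0.
Proof.
move=> k_gt0 ylast; apply/matrixP => i j; rewrite (ord1 i) (ord1 j) !mxE.
rewrite (bigD1 ord_max) //= big1 ?addr0; last first.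
  by move=> l l_neq; rewrite !mxE ifN ?mul0r // eq_sym.
rewrite !mxE eqxx mul1r /= gtn_eqF // subr0 big1 // => l _.
rewrite !mxE /= gtn_eqF //; case: eqP => [lk|]; last by rewrite mul0r.
by rewrite ylast ?mulr0.
Qed.

End Bidiagonalization.

Theorem theorem3p3 (R : rcfType) (m n k : nat)
  (A : 'M[R]_(m, n)) (b : 'cV[R]_m) (sigma : R)
  (u : nat -> 'cV[R]_m) (v : nat -> 'cV[R]_n) (mu nu : nat -> R)
  (hmn : (n <= m)%N) (hb : b != 0) (hsigma : 0 < sigma) (hk : (1 <= k)%N)
  (hbid : bidiag1_upto A b u v mu nu k)
  (R1V : (Vmat v k.+1)^T *m Vmat v k.+1 = 1%:M)
  (R1U : (Umat u k.+1)^T *m Umat u k.+1 = 1%:M)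
  (R2 : A *m Vmat v k = Umat u k.+1 *m Bmat mu nu k)
  (R3 : A^T *m Umat u k.+1
        = Vmat v k *m (Bmat mu nu k)^T + mu k *: (v k *m (elast R k)^T))
  (lam : R) (ybar : 'cV[R]_k)
  (hylast : forall i : 'I_k, i.+1 = k -> ybar i 0 = 0)
  (x : 'cV[R]_n) (hx : x = Vmat v k *m ybar)
  (hJ : Jsys (Bmat mu nu k) (cvec k b) ybar lam \in unitmx)
  (d : 'cV[R]_(k + 1))
  (hd : d = - (invmx (Jsys (Bmat mu nu k) (cvec k b) ybar lam)
               *m Fsys (Bmat mu nu k) (cvec k b) sigma ybar lam))
  (dx : 'cV[R]_n) (hdx : dx = Vmat v k *m usubmx d) :
  let g := grad_f A b sigma x lam in
  let dir := col_mx dx (dsubmx d) in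
  [/\ (dir^T *m g) 0 0 = - vnorm (Fsys A b sigma x lam) ^+ 2,
      (dir^T *m g) 0 0 <= 0 &
      (Fsys A b sigma x lam != 0 -> (dir^T *m g) 0 0 < 0)].
Proof.
move=> g dir; case: hbid => u0 _ _ _ _.
set V := Vmat v k; set B := Bmat mu nu k; set c := cvec k b.
have VV : V^T *m V = 1%:M by apply: Vmat_orthonormal_pred.
have residual : A *m (V *m ybar) - b = Umat u k.+1 *m (B *m ybar - c).
  by rewrite mulmxA R2 -{1}(Umat_cvec k hb u0) -mulmxA -mulmxBr.
have normal_residual : A^T *m (A *m (V *m ybar) - b) = V *m (B^T *m (B *m ybar - c)).
  rewrite residual mulmxA R3 mulmxDl -scalemxAl -(mulmxA (v k)).
  by rewrite elast_residual // mulmx0 scaler0 addr0 mulmxA.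
have descent : (dir^T *m g) 0 0 = - ((Fsys A b sigma x lam)^T *m Fsys A b sigma x lam) 0 0.
  rewrite /dir /g /grad_f hx hdx -lift_mx_col.
  apply: (newton_step_descent (lift_mx_orthonormal VV)).
  - exact: Fsys_reduction R1U residual normal_residual sigma lam.
  - exact: Jsys_reduction R1U VV R2 normal_residual lam.
  - by rewrite hd mulmxN mulKVmx.
rewrite descent vnorm_sqr oppr_le0 tr_mulmx_self_ge0; split=> // F_neq0.
by rewrite oppr_lt0 tr_mulmx_self_gt0.
Qed.
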